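(* Let $F$ be the elementary cellular automaton with rule number 5. For every nonempty finite word $u\in\{0,1\}^*$, the deterministic communication complexity of $\textsc{SInv}_{F,u}$ restricted to inputs of length $n$ is bounded by a constant independent of $n$.
   Context: An elementary cellular automaton (ECA) with rule number $N\in\{0,\dots,255\}$ is the map $F:\{0,1\}^{\mathbb Z}\to\{0,1\}^{\mathbb Z}$ given by $F(x)_i=f(x_{i-1},x_i,x_{i+1})$. Here the local rule $f:\{0,1\}^3\to\{0,1\}$ is determined by $N=\sum_{a,b,c\in\{0,1\}}2^{4a+2b+c}f(a,b,c)$. For a nonempty finite word $u$, $p_u\in\{0,1\}^{\mathbb Z}$ is defined by $(p_u)_i=u_{i\bmod |u|}$. For a finite word $x$, $p_u[x]$ is the configuration equal to $x$ on positions $0,\dots,|x|-1$ and to $p_u$ elsewhere. $\textsc{SInv}_{F,u}$ is the decision problem: on input a finite word $x$, decide whether there is an integer $w$ such that for all $t\ge0$ the set of positions where $F^t(p_u)$ and $F^t(p_u[x])$ differ is contained in an interval of length $w$. For each $n$, it is regarded as a function $\{0,1\}^n\to\{0,1\}$. For a function $g:X\times Y\to Z$, $D(g)$ is the minimal depth of a deterministic two-party protocol computing $g$. In such a protocol, Alice knows $x$ and Bob knows $y$. The protocol is a binary tree: each internal node is labelled by a function of Alice's input only or of Bob's input only, with values in $\{\text{left},\text{right}\}$, and each leaf is labelled by an output value. For $g:\{0,1\}^m\to Z$, set $D(g)=\max_{0\le i<m}D(g_i)$, where $g_i:\{0,1\}^i\times\{0,1\}^{m-i}\to Z$ is $g_i(x,y)=g(xy)$.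 *)

From mathcomp Require Import all_boot all_order all_algebra.
Set Implicit Arguments. Unset Strict Implicit. Unset Printing Implicit Defensive.
Import Order.TTheory GRing.Theory Num.Theory.
Local Open Scope ring_scope.

Definition config := int -> bool.

Definition local_rule (N : nat) (a b c : bool) : bool :=
  odd (N %/ 2 ^ (4 * a + 2 * b + c))%N.

Definition eca (N : nat) (x : config) : config :=
  fun i => local_rule N (x (i - 1)) (x i) (x (i + 1)).

Definition periodic (u : seq bool) : config :=
  fun i => nth false u (absz (i %% (size u)%:Z)%Z).

Definition patch (u x : seq bool) : config :=
  fun i => if (0 <= i) && (i < (size x)%:Z) then nth false x (absz i)
           else periodic u i.

Definition SInv (N : nat) (u x : seq bool) : Prop :=
  exists w : int, forall t : nat, exists a : int, forall j : int,
    iter t (eca N) (periodic u) j != iter t (eca N) (patch u x) j ->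
    a <= j < a + w.

Inductive protocol (X Y : Type) : Type :=
  | Leaf of bool
  | AliceNode of (X -> bool) & protocol X Y & protocol X Y
  | BobNode of (Y -> bool) & protocol X Y & protocol X Y.
Arguments Leaf {X Y}.

Fixpoint run (X Y : Type) (P : protocol X Y) (x : X) (y : Y) : bool :=
  match P with
  | Leaf b => b
  | AliceNode f l r => if f x then run l x y else run r x y
  | BobNode g l r => if g y then run l x y else run r x y
  end.

Fixpoint depth (X Y : Type) (P : protocol X Y) : nat :=
  match P with
  | Leaf _ => 0
  | AliceNode _ l r => (maxn (depth l) (depth r)).+1
  | BobNode _ l r => (maxn (depth l) (depth r)).+1
  end.

Definition CC_le (X Y : Type) (g : X -> Y -> Prop) (c : nat) : Prop :=
  exists P : protocol X Y, (depth P <= c)%N /\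
    forall x y, run P x y = true <-> g x y.

(* D(SInv_{F,u} restricted to {0,1}^n) <= c : max over 0 <= i < n of D(g_i) *)
Definition SInv_CC_le (N : nat) (u : seq bool) (n c : nat) : Prop :=
  forall i : nat, (i < n)%N ->
    CC_le (fun (x : i.-tuple bool) (y : (n - i).-tuple bool) =>
             SInv N u (tval x ++ tval y)) c.

(* Rule 5 is F(x)_i = ~x_{i-1} /\ ~x_{i+1}, and a direct check on the seven
   cells it depends on shows F^3 = F.  A perturbation confined to [a, b)
   spreads by at most one cell per step under any ECA, so after one or two
   steps it is confined to [a-2, b+2), and from then on the orbits of the
   two configurations only repeat those two steps.  Hence SInv_{F,u} holds
   for every input (and every u), and the constant protocol of depth 0
   computes it. *)

From mathcomp Require Import all_boot all_order all_algebra.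
From mathcomp Require Import zify.
Set Implicit Arguments. Unset Strict Implicit. Unset Printing Implicit Defensive.
Import Order.TTheory GRing.Theory Num.Theory.
Local Open Scope ring_scope.

Definition agree_outside (a b : int) (y z : config) : Prop :=
  forall j : int, (j < a) || (b <= j) -> y j = z j.

Lemma agree_outside_widen a a' b b' y z :
  agree_outside a b y z -> a' <= a -> b <= b' -> agree_outside a' b' y z.
Proof. by move=> yz le_a le_b j out_j; apply: yz; lia. Qed.

Lemma eca_agree_outside N a b y z :
  agree_outside a b y z -> agree_outside (a - 1) (b + 1) (eca N y) (eca N z).
Proof.
by move=> yz j out_j; rewrite /eca !yz //; lia.
Qed.

Lemma iter_eca_agree_outside N t a b y z :
  agree_outside a b y z ->
  agree_outside (a - t%:Z) (b + t%:Z) (iter t (eca N) y) (iter t (eca N) z).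
Proof.
move=> yz; elim: t => [|t IHt] /=; first by rewrite subr0 addr0.
by apply: agree_outside_widen (eca_agree_outside N IHt) _ _; lia.
Qed.

Lemma eca5E x i : eca 5 x i = ~~ x (i - 1) && ~~ x (i + 1).
Proof. by rewrite /eca /local_rule; case: (x (i - 1)) (x i) (x (i + 1)) => [] [] []. Qed.

Lemma eca5_iter3 x i : eca 5 (eca 5 (eca 5 x)) i = eca 5 x i.
Proof.
rewrite !eca5E !subrK !addrK.
by case: (x (i - 1 - 1 - 1)) (x (i - 1 - 1)) (x (i - 1)) (x i)
  (x (i + 1)) (x (i + 1 + 1)) (x (i + 1 + 1 + 1)) => [] [] [] [] [] [] [].
Qed.

Lemma iter_eca5_agree_outside t a b y z :
  agree_outside a b y z ->
  agree_outside (a - 2) (b + 2) (iter t (eca 5) y) (iter t (eca 5) z).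
Proof.
move=> yz; elim/ltn_ind: t => -[|[|[|t]]] IH.
- by apply: agree_outside_widen yz _ _; lia.
- by apply: agree_outside_widen (iter_eca_agree_outside 5 (t := 1) yz) _ _; lia.
- exact: (iter_eca_agree_outside 5 (t := 2) yz).
by move=> j out_j; rewrite !iterS !eca5_iter3 -!iterS; apply: IH.
Qed.

Lemma periodic_patch_agree_outside u x :
  agree_outside 0 (size x)%:Z (periodic u) (patch u x).
Proof.
by move=> j out_j; rewrite /patch; case: ifP => // /andP[? ?]; lia.
Qed.

Lemma SInv_eca5 u x : SInv 5 u x.
Proof.
exists ((size x)%:Z + 4) => t; exists (-2) => j.
have agree := iter_eca5_agree_outside t (@periodic_patch_agree_outside u x).
apply: contraR => out_j; apply/eqP/agree; rewrite sub0r.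
by move: out_j; rewrite negb_and -!leNgt; lia.
Qed.

Lemma CC_le_const (X Y : Type) (g : X -> Y -> Prop) :
  (forall x y, g x y) -> CC_le g 0.
Proof. by move=> gT; exists (Leaf true); split => // x y; split. Qed.

Theorem mainTheorem3 :
  forall u : seq bool, u != [::] ->
  exists c : nat, forall n : nat, SInv_CC_le 5 u n c.
Proof.
move=> u _; exists 0%N => n i _.
by apply: CC_le_const => x y; apply: SInv_eca5.
Qed.
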